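(* Assume $u_i=1$ for all $i$, $q_1\ge\dots\ge q_n$, and no pool size bound ($G=n$). Suppose var-Greedy returns a regime whose tests together consist exactly of individuals $\{1,\dots,n'\}$. Then there exists a non-overlapping regime maximizing welfare over $\tilde{\mathcal T}^B$ whose tests together consist exactly of individuals $\{1,\dots,n''\}$ for some $n''\le n'$.
   Context: Individual $i\in[n]$ is healthy with probability $q_i\in[0,1]$, independently. For $S\subseteq[n]$, $q_S=\prod_{i\in S}q_i$ ($q_\emptyset=1$). A test is a set $t\subseteq[n]$; with unit utilities $u(t)=q_t|t|$. $\tilde{\mathcal T}^B$ is the set of tuples of $B$ pairwise disjoint tests, with welfare $u(T)=\sum_ju(t_j)$. var-Greedy: for $j=1,\dots,B$, start with $t_j=\emptyset$ and repeatedly consider the smallest-index individual $i$ not yet placed in any test; add $i$ to $t_j$ if $u(t_j\cup\{i\})\ge u(t_j)$ (equivalently $q_i\ge |t_j|/(|t_j|+1)$), otherwise close $t_j$ and move to test $j+1$ (also stop if no individuals remain). *)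

From HB Require Import structures.
From mathcomp Require Import all_boot all_order all_algebra.
Set Implicit Arguments. Unset Strict Implicit. Unset Printing Implicit Defensive.
Import Order.TTheory GRing.Theory Num.Theory.
Local Open Scope ring_scope.

(* Individuals are 'I_n (individual i+1 of the paper is the ordinal i).
   Tests are finite sets of individuals. *)
Section Defs.
Variables (R : realFieldType) (n : nat) (q : 'I_n -> R).

Definition qS (t : {set 'I_n}) : R := \prod_(i in t) q i.

(* unit utilities: u(t) = q_t |t| *)
Definition util (t : {set 'I_n}) : R := qS t * #|t|%:R.

Definition welfare (B : nat) (T : {ffun 'I_B -> {set 'I_n}}) : R :=
  \sum_(j < B) util (T j).

(* tuples in \tilde{T}^B : pairwise disjoint tests *)
Definition pairwise_disjoint (B : nat) (T : {ffun 'I_B -> {set 'I_n}}) : Prop :=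
  forall j k : 'I_B, j != k -> [disjoint T j & T k].

Definition covered (B : nat) (T : {ffun 'I_B -> {set 'I_n}}) : {set 'I_n} :=
  \bigcup_(j < B) T j.

(* The fuel (n suffices) bounds the number of iterations. *)
Fixpoint build_test (fuel : nat) (i : nat) (t : {set 'I_n}) : {set 'I_n} * nat :=
  match fuel with
  | 0 => (t, i)
  | fuel'.+1 =>
    match @insub nat (fun k => k < n)%N _ i with
    | Some x =>
        if util t <= util (x |: t) then build_test fuel' i.+1 (x |: t)
        else (t, i)
    | None => (t, i)
    end
  end.

Fixpoint greedy_aux (B : nat) (i : nat) : seq {set 'I_n} :=
  match B with
  | 0 => [::]
  | B'.+1 => let p := build_test n i set0 in p.1 :: greedy_aux B' p.2
  end.

Definition var_greedy (B : nat) : seq {set 'I_n} := greedy_aux B 0.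

Definition greedy_covered (B : nat) : {set 'I_n} :=
  \bigcup_(t <- var_greedy B) t.

End Defs.

Definition prefix_set (n m : nat) : {set 'I_n} := [set i : 'I_n | (i < m)%N].

(* Choose, among the welfare-maximizing regimes of \tilde T^B, one of least
   weight, the weight being the sum of the (1-based) indices of the covered
   individuals.  Such a best regime T has two exchange properties:
   - tightness: a member z of a test t cannot be dropped, so by the utility
     formula |t| - 1 < q_z |t|;
   - downward closure: if y is covered and x < y, then x is covered, since
     trading y for the healthier x keeps the welfare and lowers the weight.
   On the greedy side, var-Greedy covers 1, ..., sum ks in consecutive runs of
   sizes ks_1, ..., ks_B, and every individual after the j-th run satisfies
   q_x (ks_j + 1) < ks_j.  Combining this with tightness, a test of T larger
   than ks_j lies inside the first j runs, and a counting argument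
   (sumn_le_of_prefix_bounds) gives |covered T| <= sum ks = n'.  Downward
   closure then makes covered T the prefix of length |covered T|. *)
From HB Require Import structures.
From mathcomp Require Import all_boot all_order all_algebra.
From mathcomp Require Import zify ring lra.
Import Order.TTheory GRing.Theory Num.Theory.
Local Open Scope ring_scope.
Set Implicit Arguments. Unset Strict Implicit.

Lemma card_bigcup_disjoint (I T : finType) (P : pred I) (F : I -> {set T}) :
  (forall i j, i != j -> [disjoint F i & F j]) ->
  #|\bigcup_(i | P i) F i| = (\sum_(i | P i) #|F i|)%N.
Proof.
move=> disjF; pose G i := if P i then F i else set0.
have disjG i j : i != j -> [disjoint G i & G j].
  move=> hij; rewrite /G -setI_eq0.
  by case: (P i); case: (P j); rewrite ?setI0 ?set0I // setI_eq0; apply: disjF.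
rewrite (big_mkcond P F) (big_mkcond P (fun i => #|F i|)) -/G.
rewrite -sum1_card partition_disjoint_bigcup //.
by apply: eq_bigr => i _; rewrite sum1_card /G; case: (P i); rewrite ?cards0.
Qed.

(* A combinatorial exchange bound: if, for every j, the entries of cs that
   exceed ks_j add up to at most ks_0 + ... + ks_j, then sum cs <= sum ks.
   (Peel off the last k of ks: either every c exceeds it, or some c <= k can be
   charged to it.) *)
Lemma sumn_le_of_prefix_bounds (ks cs : seq nat) : size cs = size ks ->
  (forall j, (j < size ks)%N ->
     (\sum_(c <- cs | nth 0 ks j < c) c <= sumn (take j.+1 ks))%N) ->
  (sumn cs <= sumn ks)%N.
Proof.
elim/last_ind: ks cs => [|ks k IH] cs; first by case: cs.
rewrite size_rcons => size_cs bounds.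
have [all_gt|/allPn[c0 c0_cs]] := boolP (all (fun c => k < c)%N cs).
  have := bounds (size ks) (ltnSn _).
  rewrite nth_rcons ltnn eqxx take_oversize ?size_rcons //.
  by rewrite -big_filter (all_filterP all_gt) -sumnE.
rewrite -leqNgt => c0_le_k.
have perm_cs := perm_to_rem c0_cs.
rewrite (perm_sumn perm_cs) /= sumn_rcons.
suff: (sumn (rem c0 cs) <= sumn ks)%N by lia.
apply: IH => [|j lt_j]; first by rewrite size_rem // size_cs.
have := bounds j (leq_trans lt_j (leqnSn _)).
rewrite nth_rcons lt_j -cats1 takel_cat //; apply: leq_trans.
by rewrite (perm_big _ perm_cs) /= big_cons; case: ifP => _ //; apply: leq_addl.
Qed.

(* The numerical heart of the comparison with var-Greedy: an individual of
   health x with x (k+1) < k cannot sit in a test of size c > k from which it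
   cannot be removed without losing utility, i.e. with c - 1 < x c. *)
Lemma test_size_le_threshold (R : realFieldType) (x : R) (c k : nat) :
  0 <= x <= 1 -> x * k.+1%:R < k%:R -> c%:R - 1 < x * c%:R -> (c <= k)%N.
Proof.
move=> /andP[x_ge0 x_le1] x_small x_tight; rewrite leqNgt; apply/negP => lt_kc.
have : k.+1%:R <= c%:R :> R by rewrite ler_nat.
have : 0 <= 1 - x by rewrite subr_ge0.
rewrite mulrS in x_small; nra.
Qed.

Section Intervals.
Variable n : nat.

Definition itv (a b : nat) : {set 'I_n} := [set y : 'I_n | (a <= y < b)%N].

Lemma prefix_itv m : prefix_set n m = itv 0 m.
Proof. by apply/setP => y; rewrite !inE. Qed.

Lemma notin_itv a b (x : 'I_n) : val x = b -> x \notin itv a b.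
Proof. by move=> xb; rewrite inE xb ltnn andbF. Qed.

Lemma itvSr a b (x : 'I_n) : (a <= b)%N -> val x = b -> x |: itv a b = itv a b.+1.
Proof.
move=> le_ab xb; apply/setP => y; rewrite !inE -val_eqE xb /=.
by case: (ltngtP y b) => h; rewrite ?h /=; lia.
Qed.

Lemma card_itv a b : (a <= b <= n)%N -> #|itv a b| = (b - a)%N.
Proof.
elim: b => [|b IH] /andP[le_ab le_bn].
  by apply/eqP; rewrite sub0n cards_eq0; apply/eqP/setP => y; rewrite !inE ltn0 andbF.
have [lt_ab|lt_ba|<-] := ltngtP a b.+1; last 2 first.
- by lia.
- by apply/eqP; rewrite subnn cards_eq0; apply/eqP/setP => y; rewrite !inE; lia.
rewrite -(itvSr (x := Ordinal le_bn)) // cardsU1 notin_itv // IH; lia.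
Qed.

(* Individuals beyond n do not exist, so an interval has at most b - a elements
   whatever b is. *)
Lemma card_itv_le a b : (#|itv a b| <= b - a)%N.
Proof.
have [le_ba|le_ab] := leqP b a.
  have -> : itv a b = set0 by apply/setP => y; rewrite !inE; lia.
  by rewrite cards0.
have [le_bn|lt_nb] := leqP b n; first by rewrite card_itv ?(ltnW le_ab).
have -> : itv a b = itv a n.
  by apply/setP => y; rewrite !inE (ltn_ord y) (ltn_trans _ lt_nb).
have [le_an|lt_na] := leqP a n; first by rewrite card_itv ?le_an //; lia.
have -> : itv a n = set0 by apply/setP => y; rewrite !inE; lia.
by rewrite cards0.
Qed.

Lemma downward_closed_prefix (S : {set 'I_n}) :
  (forall x y : 'I_n, (x < y)%N -> y \in S -> x \in S) -> S = prefix_set n #|S|.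
Proof.
move=> closed; apply/eqP; rewrite eqEcard; apply/andP; split.
  apply/subsetP => z zS; rewrite inE ltnNge; apply/negP => le_Sz.
  have : itv 0 z.+1 \subset S.
    apply/subsetP => v; rewrite inE /= ltnS leq_eqVlt => /orP[/eqP/val_inj-> //|].
    by move/closed; apply.
  move/subset_leq_card; rewrite card_itv ?ltn_ord //; lia.
have le_Sn : (#|S| <= n)%N by rewrite (leq_trans (max_card _)) ?card_ord.
by rewrite prefix_itv card_itv ?le_Sn //; lia.
Qed.
End Intervals.

Section Utility.
Variables (R : realFieldType) (n : nat) (q : 'I_n -> R).
Hypothesis q_prob : forall i, 0 <= q i <= 1.

Lemma qS_ge0 (t : {set 'I_n}) : 0 <= qS q t.
Proof. by apply: prodr_ge0 => i _; case/andP: (q_prob i). Qed.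

Lemma util_setU1 (x : 'I_n) (t : {set 'I_n}) : x \notin t ->
  util q (x |: t) = q x * qS q t * #|t|.+1%:R.
Proof. by move=> xt; rewrite /util /qS big_setU1 // cardsU1 xt. Qed.

Lemma util_setU1_lt (x : 'I_n) (t : {set 'I_n}) : x \notin t ->
  util q (x |: t) < util q t -> q x * #|t|.+1%:R < #|t|%:R.
Proof.
move=> xt; rewrite util_setU1 // /util -mulrA mulrCA; apply: contraTT.
by rewrite -!leNgt => /(ler_wpM2l (qS_ge0 t)).
Qed.

Lemma util_setD1_lt (z : 'I_n) (t : {set 'I_n}) : z \in t ->
  util q (t :\ z) < util q t -> #|t|%:R - 1 < q z * #|t|%:R.
Proof.
move=> zt; rewrite -{2}(setD1K zt) util_setU1 ?setD11 // (cardsD1 z t) zt.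
rewrite /util -natr1 addrK -mulrA mulrCA; apply: contraTT.
by rewrite -!leNgt => /(ler_wpM2l (qS_ge0 (t :\ z))).
Qed.

Lemma util_swap (t : {set 'I_n}) (x y : 'I_n) : y \in t -> x \notin t ->
  q y <= q x -> util q t <= util q (x |: (t :\ y)).
Proof.
move=> yt xt le_yx; rewrite -{1}(setD1K yt) !util_setU1 ?setD11 //; last first.
  by rewrite !inE negb_and xt orbT.
by rewrite ler_wpM2r // ler_wpM2r // qS_ge0.
Qed.
End Utility.

Section GreedyAnalysis.
Variables (R : realFieldType) (n : nat) (q : 'I_n -> R).

Lemma build_test_spec fuel i0 i : (i0 <= i <= n)%N ->
  let p := build_test q fuel i (itv n i0 i) in
  [/\ p.1 = itv n i0 p.2, (i <= p.2 <= n)%N &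
      forall x : 'I_n, val x = p.2 ->
        (i + fuel <= p.2)%N \/ util q (x |: p.1) < util q p.1].
Proof.
elim: fuel i => [|fuel IH] i /andP[le_i0i le_in] /=.
  by split=> //; [rewrite leqnn | left; rewrite addn0].
case: insubP => [x lt_in xi|ge_in]; last first.
  split=> //= [|y yi]; first by rewrite leqnn.
  by move: ge_in; rewrite -yi ltn_ord.
case: ifP => [le_util|]; last first.
  split=> [||y /= yi] //; first by rewrite leqnn.
  by right; rewrite ltNge (_ : y = x) ?negbT //; apply: val_inj; rewrite /= yi -xi.
rewrite (itvSr (x := x)) //.
have [-> bounds stop] := IH i.+1 (introT andP (conj (leqW le_i0i) lt_in)).
split=> [||y yi] //; first by move: bounds; lia.
by case: (stop y yi) => [?|?]; [left; lia | right].
Qed.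

Hypothesis q_prob : forall i, 0 <= q i <= 1.
Hypothesis q_sorted : forall i j : 'I_n, (i <= j)%N -> q j <= q i.

(* This is the only information about the greedy
   regime that the comparison with an optimal regime needs. *)
Lemma greedy_spec B i : (i <= n)%N ->
  exists ks : seq nat, [/\ size ks = B,
    \bigcup_(t <- greedy_aux q B i) t = itv n i (i + sumn ks),
    (i + sumn ks <= n)%N &
    forall j, (j < B)%N -> forall x : 'I_n, (i + sumn (take j.+1 ks) <= x)%N ->
      q x * (nth 0 ks j).+1%:R < (nth 0 ks j)%:R].
Proof.
elim: B i => [|B IH] i le_in.
  exists [::]; split=> //; last by rewrite addn0.
  by rewrite big_nil; apply/setP => y; rewrite !inE addn0; lia.
have -> : greedy_aux q B.+1 i =
  (build_test q n i set0).1 :: greedy_aux q B (build_test q n i set0).2 by [].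
have -> : build_test q n i set0 = build_test q n i (itv n i i).
  by congr build_test; apply/setP => y; rewrite !inE; lia.
have := @build_test_spec n i i; rewrite leqnn le_in => /(_ isT).
set p := build_test q n i (itv n i i) => -[test_p /andP[le_ip le_pn] stop_p].
have [ks [size_ks cover_ks le_ks thresholds]] := IH p.2 le_pn.
exists ((p.2 - i)%N :: ks); split=> /=; first by rewrite size_ks.
- by rewrite big_cons cover_ks test_p; apply/setP => y; rewrite !inE; lia.
- by lia.
case=> [|j] lt_jB x /=; last by rewrite ltnS in lt_jB; move=> ?; apply: thresholds; lia.
rewrite take0 /= addn0 => le_px.
have lt_pn : (p.2 < n)%N by move: (ltn_ord x); lia.
case: (stop_p (Ordinal lt_pn) erefl) => [/=|drop_lt]; first by lia.
rewrite test_p in drop_lt.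
have := util_setU1_lt q_prob (notin_itv i (x := Ordinal lt_pn) erefl) drop_lt.
rewrite card_itv ?le_ip //; apply: le_lt_trans.
by rewrite /= ler_wpM2r // q_sorted //=; lia.
Qed.
End GreedyAnalysis.

Section Regimes.
Variables (R : realFieldType) (n B : nat) (q : 'I_n -> R).
Implicit Types (T : {ffun 'I_B -> {set 'I_n}}) (S : {set 'I_n}).

(* Boolean form of membership in \tilde T^B, for searching the finite space
   of regimes. *)
Definition disjointb T : bool :=
  [forall j, forall k, (j != k) ==> [disjoint T j & T k]].

Lemma disjointbP T : reflect (pairwise_disjoint T) (disjointb T).
Proof.
apply: (iffP forallP) => [dT j k|dT j]; first by move/forallP/(_ k)/implyP: (dT j).
by apply/forallP => k; apply/implyP/dT.
Qed.

Definition replace_test T j S : {ffun 'I_B -> {set 'I_n}} :=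
  [ffun k => if k == j then S else T k].

Definition others T j : {set 'I_n} := \bigcup_(k | k != j) T k.

Lemma welfare_replace T j S :
  welfare q (replace_test T j S) = welfare q T - util q (T j) + util q S.
Proof.
rewrite /welfare (bigD1 j) //= [in RHS](bigD1 j) //= ffunE eqxx.
rewrite (eq_bigr (fun k => util q (T k))) => [|k kj]; last by rewrite ffunE (negbTE kj).
by ring.
Qed.

Lemma covered_replace T j S : covered (replace_test T j S) = S :|: others T j.
Proof.
rewrite /covered (bigD1 j) //= ffunE eqxx; congr (_ :|: _).
by apply: eq_bigr => k kj; rewrite ffunE (negbTE kj).
Qed.

Lemma covered_others T j : covered T = T j :|: others T j.
Proof. by rewrite /covered (bigD1 j). Qed.

Lemma disjoint_others T j : pairwise_disjoint T -> [disjoint T j & others T j].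
Proof. by move=> dT; apply/bigcup_disjointP => k kj; apply: dT; rewrite eq_sym. Qed.

Lemma covered_replace_setD1 T j y A : pairwise_disjoint T -> y \in T j ->
  covered (replace_test T j (A :|: (T j :\ y))) = A :|: (covered T :\ y).
Proof.
move=> dT yT; rewrite covered_replace (covered_others _ j) -setUA setDUl.
congr (_ :|: (_ :|: _)); apply/esym/setDidPl; rewrite disjoint_sym disjoints1.
by rewrite (disjointFr (disjoint_others j dT) yT).
Qed.

Lemma disjoint_replace T j S : pairwise_disjoint T ->
  [disjoint S & others T j] -> pairwise_disjoint (replace_test T j S).
Proof.
move=> dT /bigcup_disjointP dS k1 k2 k12; rewrite !ffunE.
case: ifP => [/eqP k1j|/negbT k1j]; case: ifP => [/eqP k2j|/negbT k2j].
- by rewrite k1j k2j eqxx in k12.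
- exact: dS.
- by rewrite disjoint_sym; apply: dS.
- exact: dT.
Qed.
End Regimes.

Section BestRegime.
Variables (R : realFieldType) (n B : nat) (q : 'I_n -> R).
Implicit Types (T : {ffun 'I_B -> {set 'I_n}}).

Definition optimal T : Prop :=
  pairwise_disjoint T /\
  forall T', pairwise_disjoint T' -> welfare q T' <= welfare q T.

(* Tie-breaking potential: the total (1-based) index of the covered
   individuals.  Dropping an individual or trading one for a healthier
   outsider strictly decreases it. *)
Definition weight T : nat := (\sum_(i in covered T) i.+1)%N.

Definition best T : Prop :=
  optimal T /\ forall T', optimal T' -> (weight T <= weight T')%N.

Lemma exists_best : exists T, best T.
Proof.
pose T0 : {ffun 'I_B -> {set 'I_n}} := [ffun _ => set0].
have dT0 : disjointb T0 by apply/disjointbP => j k _; rewrite !ffunE -setI_eq0 setI0.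
have [Tw /disjointbP dTw Tw_argmax] := arg_maxP (fun T => welfare q T) dT0.
have Tw_max T' : pairwise_disjoint T' -> welfare q T' <= welfare q Tw.
  by move/disjointbP; apply: Tw_argmax.
pose P T := disjointb T && (welfare q T == welfare q Tw).
have PTw : P Tw by rewrite /P eqxx andbT; apply/disjointbP.
have [T /andP[/disjointbP dT /eqP wT] T_min] := arg_minnP weight PTw.
exists T; split=> [|T' [dT' T'_max]]; first by split=> // T' /Tw_max; rewrite wT.
apply: T_min; rewrite /P eq_le Tw_max // -wT T'_max // !andbT; exact/disjointbP.
Qed.
End BestRegime.

Section BestProperties.
Variables (R : realFieldType) (n B : nat) (q : 'I_n -> R).
Hypothesis q_prob : forall i, 0 <= q i <= 1.
Hypothesis q_sorted : forall i j : 'I_n, (i <= j)%N -> q j <= q i.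
Variable T : {ffun 'I_B -> {set 'I_n}}.
Hypothesis T_best : best q T.

Let T_disjoint : pairwise_disjoint T. Proof. by case: T_best => -[]. Qed.

Lemma lighter_regime_worse (T' : {ffun 'I_B -> {set 'I_n}}) :
  pairwise_disjoint T' -> (weight T' < weight T)%N -> welfare q T' < welfare q T.
Proof.
case: T_best => -[_ T_max] T_min dT' lighter; rewrite ltNge; apply/negP => le_TT'.
have T'_opt : optimal q T' by split=> // T'' /T_max /le_trans; apply.
by move: (T_min T' T'_opt); rewrite leqNgt lighter.
Qed.

Lemma weight_replace_setD1 j y (A : {set 'I_n}) : y \in T j ->
  [disjoint A & covered T :\ y] ->
  weight T = (y.+1 + \sum_(i in covered T :\ y) i.+1)%N /\
  weight (replace_test T j (A :|: (T j :\ y))) =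
    (\sum_(i in A) i.+1 + \sum_(i in covered T :\ y) i.+1)%N.
Proof.
move=> yT dA; rewrite /weight covered_replace_setD1 // (big_setD1 y); last first.
  by rewrite (covered_others _ j) inE yT.
by split=> //; rewrite -bigU //; apply: eq_bigl => i; rewrite !inE.
Qed.

Lemma best_tight j z : z \in T j -> #|T j|%:R - 1 < q z * #|T j|%:R.
Proof.
move=> zT; apply: (util_setD1_lt q_prob zT).
pose T' := replace_test T j (set0 :|: (T j :\ z)).
have dT' : pairwise_disjoint T'.
  apply: disjoint_replace T_disjoint _; rewrite set0U.
  exact: disjointWl (subD1set _ _) (disjoint_others j T_disjoint).
have d0 : [disjoint set0 & covered T :\ z] by rewrite -setI_eq0 set0I.
have [wT wT'] := weight_replace_setD1 zT d0.
have := lighter_regime_worse dT'; rewrite wT wT' big_set0 ltn_add2r => /(_ isT).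
by rewrite welfare_replace set0U; lra.
Qed.

(* The covered individuals are closed under passing to healthier ones:
   otherwise trading a covered y for an uncovered healthier x < y would give a
   lighter regime of no smaller welfare. *)
Lemma best_downward (x y : 'I_n) : (x < y)%N -> y \in covered T -> x \in covered T.
Proof.
move=> lt_xy yT; apply/negPn/negP => xT; have [j _ yTj] := bigcupP yT.
pose T' := replace_test T j ([set x] :|: (T j :\ y)).
have xTj : x \notin T j by apply: contra xT; rewrite (covered_others _ j) inE => ->.
have dT' : pairwise_disjoint T'.
  apply: disjoint_replace T_disjoint _.
  rewrite -setI_eq0 setIUl setU_eq0 !setI_eq0 disjoints1.
  rewrite (disjointWl (subD1set _ _) (disjoint_others j T_disjoint)) andbT.
  by apply: contra xT; rewrite (covered_others _ j) inE orbC => ->.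
have dx : [disjoint [set x] & covered T :\ y].
  by rewrite disjoints1 inE negb_and xT orbT.
have [wT wT'] := weight_replace_setD1 yTj dx.
have := lighter_regime_worse dT'; rewrite wT wT' big_set1 ltn_add2r ltnS => /(_ lt_xy).
rewrite welfare_replace ltNge => /negP; apply.
have := util_swap q_prob yTj xTj (q_sorted (ltnW lt_xy)); lra.
Qed.
End BestProperties.

(* Indeed a test
   larger than ks_j contains, by test_size_le_threshold, only individuals of
   the first j+1 greedy runs. *)
Lemma covered_card_le (R : realFieldType) (n B : nat) (q : 'I_n -> R)
    (T : {ffun 'I_B -> {set 'I_n}}) (ks : seq nat) :
  (forall i, 0 <= q i <= 1) -> pairwise_disjoint T -> size ks = B ->
  (forall j z, z \in T j -> #|T j|%:R - 1 < q z * #|T j|%:R) ->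
  (forall j, (j < B)%N -> forall x : 'I_n, (sumn (take j.+1 ks) <= x)%N ->
     q x * (nth 0 ks j).+1%:R < (nth 0 ks j)%:R) ->
  (#|covered T| <= sumn ks)%N.
Proof.
move=> q_prob dT size_ks tight thresholds.
rewrite /covered card_bigcup_disjoint // -big_enum -(big_map (fun j => #|T j|) xpredT id).
rewrite -sumnE; apply: sumn_le_of_prefix_bounds => [|j lt_j].
  by rewrite size_map size_enum_ord.
rewrite big_map big_enum_cond -card_bigcup_disjoint //=.
have := card_itv_le n 0 (sumn (take j.+1 ks)); rewrite subn0; apply: leq_trans.
apply: subset_leq_card.
apply/subsetP => z /bigcupP[i big_i zTi]; rewrite inE /= ltnNge; apply/negP => late_z.
have := test_size_le_threshold (q_prob z) _ (tight i z zTi).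
rewrite size_ks in lt_j.
by move=> /(_ _ (thresholds j lt_j z late_z)); rewrite leqNgt big_i.
Qed.

Theorem mainTheorem12 (R : realFieldType) (n B : nat) (q : 'I_n -> R)
  (hq : forall i, 0 <= q i <= 1)
  (hsorted : forall i j : 'I_n, (i <= j)%N -> q j <= q i)
  (n' : nat)
  (hgreedy : greedy_covered q B = prefix_set n n') :
  exists T : {ffun 'I_B -> {set 'I_n}},
    [/\ pairwise_disjoint T,
        (forall T' : {ffun 'I_B -> {set 'I_n}},
            pairwise_disjoint T' -> welfare q T' <= welfare q T)
      & exists2 n'' : nat, (n'' <= n')%N & covered T = prefix_set n n''].
Proof.
have [T T_best] := exists_best B q; have [[dT T_max] _] := T_best.
have [ks [size_ks greedy_ks le_ks_n thresholds]] := greedy_spec hq hsorted B (leq0n n).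
have le_covered_ks : (#|covered T| <= sumn ks)%N.
  exact: covered_card_le hq dT size_ks (best_tight hq T_best) thresholds.
have le_ks_n' : (sumn ks <= n')%N.
  have := card_itv_le n 0 n'; rewrite -prefix_itv -hgreedy subn0.
  by rewrite /greedy_covered /var_greedy greedy_ks card_itv // subn0.
exists T; split=> //; exists #|covered T|; first exact: leq_trans le_ks_n'.
exact/downward_closed_prefix/(best_downward hq hsorted T_best).
Qed.
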